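(* Let $X_n(\underline{d})=X_n(d_1,\dots,d_r)\subset\mathbb{C}P^{n+r}$ be a complete intersection with $d_1,\dots,d_r>1$ and set $c_1=n+r+1-\sum_{i=1}^rd_i$. Then: (1) ${\rm Td}(X_n(\underline{d}))=1$ if $c_1>0$, and ${\rm Td}(X_n(\underline{d}))=1+(-1)^n$ if $c_1=0$. (2) If $c_1<0$, then $(-1)^n{\rm Td}(X_n(\underline{d}))\geqslant\binom{n+1-c_1}{n+1}+(-1)^n$.
   Context: A complete intersection $X_n(d_1,\dots,d_r)\subset\mathbb{C}P^{n+r}$ is a compact complex $n$-dimensional manifold given as the transversal intersection of $r$ nonsingular hypersurfaces of degrees $d_1,\dots,d_r$; its first Chern class is $c_1x$ with $x$ the pullback of the hyperplane class. The Todd genus is ${\rm Td}(M)=\big(\prod_i\frac{x_i}{1-e^{-x_i}}\big)[M]$ for formal Chern roots $x_i$. Generalized binomial coefficients: $\binom{a}{m}=\frac{a(a-1)\cdots(a-m+1)}{m!}$. *)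

From mathcomp Require Import all_boot all_order all_algebra.
Set Implicit Arguments. Unset Strict Implicit. Unset Printing Implicit Defensive.
Import Order.TTheory GRing.Theory Num.Theory.
Local Open Scope ring_scope.

(* Coefficients of the power series  e(x) = (1 - e^{-x})/x = sum_k (-1)^k x^k/(k+1)!. *)
Definition ecoef (k : nat) : rat := (-1) ^+ k / (k.+1)`!%:R.

(* Coefficients of the Todd series  x/(1-e^{-x}) = 1/e(x), computed by the
   recursion  t_0 = 1,  t_m = - sum_{j=1}^m e_j t_{m-j}  (i.e. t * e = 1). *)
Fixpoint todd_seq (m : nat) : seq rat :=
  match m with
  | 0 => [:: 1]
  | m'.+1 => let s := todd_seq m' in
      rcons s (- \sum_(j < m'.+1) ecoef j.+1 * nth 0 s (m' - j))
  end.

Definition todd_coef (k : nat) : rat := nth 0 (todd_seq k) k.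

Definition todd_poly (n : nat) : {poly rat} := \poly_(k < n.+1) todd_coef k.

Definition edpoly (n d : nat) : {poly rat} := \poly_(k < n.+1) (d%:R ^+ k * ecoef k).

(* With x the hyperplane class, td(TX) = (x/(1-e^{-x}))^{n+r+1} / prod_i (d_i x/(1-e^{-d_i x}))
   (from TX + ⊕ O(d_i) = T CP^{n+r}|_X), and x^n[X] = prod_i d_i. *)
Definition ci_todd (n : nat) (ds : seq nat) : rat :=
  (\prod_(d <- ds) (d%:R : rat)) *
  ((todd_poly n) ^+ (n + size ds).+1 * \prod_(d <- ds) edpoly n d)`_n.

Definition ci_c1 (n : nat) (ds : seq nat) : int :=
  ((n + size ds).+1)%:Z - (\sum_(d <- ds) d)%:Z.

Definition gbinom (a : rat) (m : nat) : rat :=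
  (\prod_(i < m) (a - i%:R)) / m`!%:R.

(* Write x for the hyperplane class, T(x) = x/(1-e^{-x}), u = e^{-x} and
   G(y) = prod_i (1 + y + ... + y^(d_i - 1)), a polynomial of degree
   D = sum_i (d_i - 1) = n + 1 - c_1 with G_0 = G_D = 1 and G_a >= 1 for a <= D.
   Since d_i T(x)/T(d_i x) = (1 - u^(d_i))/(1 - u) = 1 + u + ... + u^(d_i - 1),
   the Todd genus is [x^n] T^(n+1) G(u) = sum_a G_a [x^n] T^(n+1) u^a.  The substitution
   y = 1 - e^{-x} turns [x^j] T^(j+1) u^(a+1) into [y^j] (1-y)^a = (-1)^j C(a, j);
   formally this follows by induction from u' = -u, T e = 1 with
   e(x) = (1 - e^{-x})/x, and [x^j] T^(j+1) = 1.  Hence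
   Td = 1 + (-1)^n sum_(a < D) G_(a+1) C(a, n), which is 1 if D <= n and
   1 + (-1)^n if D = n + 1; if D > n + 1 it is, after multiplying by (-1)^n,
   at least (-1)^n + sum_(a < D) C(a, n) = (-1)^n + C(D, n + 1).
   All power series are handled as polynomials modulo a power of x. *)

From mathcomp Require Import all_boot all_order all_algebra.
From mathcomp Require Import ring zify.
Set Implicit Arguments. Unset Strict Implicit. Unset Printing Implicit Defensive.
Import Order.TTheory GRing.Theory Num.Theory.
Local Open Scope ring_scope.

Definition eqmodXn {R : comNzRingType} (k : nat) (p q : {poly R}) :=
  exists r : {poly R}, p = q + r * 'X^k.

Notation "p = q %[modXn k ]" := (eqmodXn k p q)
  (at level 70, q at next level, format "'[hv ' p '/'  =  q '/'  %[modXn  k ] ']'").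

Section EqModXn.
Variable R : comNzRingType.
Implicit Types p q : {poly R}.

Lemma eqmodXnP k p q :
  p = q %[modXn k] <-> (forall i, (i < k)%N -> p`_i = q`_i).
Proof.
split=> [[r ->] i lt_ik|eq_pq]; first by rewrite coefD coefMXn lt_ik addr0.
exists (drop_poly k (p - q)).
have take0 : take_poly k (p - q) = 0.
  apply/polyP => i; rewrite coef_take_poly coef0 coefB.
  by case: ifP => // /eq_pq ->; rewrite subrr.
by rewrite -[X in _ = _ + X]add0r -take0 poly_take_drop addrC subrK.
Qed.

Lemma eqmodXn_refl k p : p = p %[modXn k].
Proof. by exists 0; rewrite mul0r addr0. Qed.

Lemma eqmodXn_sym k p q : p = q %[modXn k] -> q = p %[modXn k].
Proof. by case=> r ->; exists (- r); rewrite mulNr addrK. Qed.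

Lemma eqmodXn_trans k q p s :
  p = q %[modXn k] -> q = s %[modXn k] -> p = s %[modXn k].
Proof. by case=> r1 -> [r2 ->]; exists (r2 + r1); rewrite mulrDl addrA. Qed.

Lemma eqmodXnD k p1 q1 p2 q2 :
  p1 = q1 %[modXn k] -> p2 = q2 %[modXn k] -> p1 + p2 = q1 + q2 %[modXn k].
Proof. by case=> r1 -> [r2 ->]; exists (r1 + r2); ring. Qed.

Lemma eqmodXnB k p1 q1 p2 q2 :
  p1 = q1 %[modXn k] -> p2 = q2 %[modXn k] -> p1 - p2 = q1 - q2 %[modXn k].
Proof. by case=> r1 -> [r2 ->]; exists (r1 - r2); ring. Qed.

Lemma eqmodXnM k p1 q1 p2 q2 :
  p1 = q1 %[modXn k] -> p2 = q2 %[modXn k] -> p1 * p2 = q1 * q2 %[modXn k].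
Proof. by case=> r1 -> [r2 ->]; exists (r1 * q2 + q1 * r2 + r1 * r2 * 'X^k); ring. Qed.

Lemma eqmodXnMl k r p q : p = q %[modXn k] -> r * p = r * q %[modXn k].
Proof. exact/eqmodXnM/eqmodXn_refl. Qed.

Lemma eqmodXnX k p q m : p = q %[modXn k] -> p ^+ m = q ^+ m %[modXn k].
Proof.
move=> eq_pq; elim: m => [|m IHm]; first exact: eqmodXn_refl.
by rewrite !exprS; apply: eqmodXnM.
Qed.

Lemma eqmodXn_prod k (I : Type) (s : seq I) (F G : I -> {poly R}) :
  (forall i, F i = G i %[modXn k]) ->
  \prod_(i <- s) F i = \prod_(i <- s) G i %[modXn k].
Proof.
move=> eqFG; elim: s => [|i s IHs]; first by rewrite !big_nil; apply: eqmodXn_refl.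
by rewrite !big_cons; apply: eqmodXnM.
Qed.

Lemma eqmodXn_leq j k p q : (j <= k)%N -> p = q %[modXn k] -> p = q %[modXn j].
Proof.
move=> le_jk /eqmodXnP eq_pq; apply/eqmodXnP => i lt_ij.
exact/eq_pq/(leq_trans lt_ij).
Qed.

Lemma eqmodXn_mulX k p q : 'X * p = 'X * q %[modXn k.+1] <-> p = q %[modXn k].
Proof.
rewrite !eqmodXnP; split=> eq_pq i lt_ik.
  by have := eq_pq i.+1 lt_ik; rewrite !coefXM.
by rewrite !coefXM; case: i lt_ik => // i /eq_pq.
Qed.

Lemma eqmodXn_deriv k p q : p = q %[modXn k.+1] -> p^`() = q^`() %[modXn k].
Proof.
case=> r ->; exists (r^`() * 'X + r *+ k.+1).
by rewrite derivD derivM derivXn exprS mulrDl mulrA mulrnAr mulrnAl.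
Qed.

End EqModXn.

Lemma fact_neq0 {R : numDomainType} k : (k`!%:R : R) != 0.
Proof. by rewrite pnatr_eq0 -lt0n fact_gt0. Qed.

Lemma coef_exp_deriv (R : numDomainType) (p : {poly R}) j :
  (p ^+ j * p^`())`_j = (p ^+ j.+1)`_j.+1.
Proof.
apply: (@pmulrnI _ j.+1) => //; rewrite -coef_deriv deriv_exp coefMn.
by rewrite mulrC.
Qed.

Lemma size_todd_seq m : size (todd_seq m) = m.+1.
Proof. by elim: m => //= m IHm; rewrite size_rcons IHm. Qed.

Lemma nth_todd_seq m i : (i <= m)%N -> nth 0 (todd_seq m) i = todd_coef i.
Proof.
elim: m => [|m IHm]; first by rewrite leqn0 => /eqP ->.
rewrite leq_eqVlt => /predU1P[-> //|lt_im].
by rewrite /= nth_rcons size_todd_seq lt_im IHm.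
Qed.

Lemma todd_coefS m :
  todd_coef m.+1 = - \sum_(j < m.+1) ecoef j.+1 * todd_coef (m - j).
Proof.
rewrite /todd_coef /= nth_rcons size_todd_seq ltnn eqxx.
by congr (- _); apply: eq_bigr => j _; rewrite nth_todd_seq ?leq_subr.
Qed.

Lemma ecoefS k : ecoef k.+1 *+ k.+2 = - ecoef k.
Proof.
rewrite /ecoef -mulr_natr factS natrM exprS.
have k2_neq0 : (k.+2%:R : rat) != 0 by rewrite pnatr_eq0.
field; by rewrite fact_neq0 -(natrD _ 2 k) k2_neq0.
Qed.

(* The truncation of [1 - x (1 - e^{-x})/x = e^{-x}]. *)
Definition expNX (n : nat) : {poly rat} := 1 - 'X * edpoly n 1.

Section ToddSeries.
Variable n : nat.
Local Notation T := (todd_poly n).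
Local Notation e := (edpoly n 1).

Lemma coef_todd_poly k : (k <= n)%N -> T`_k = todd_coef k.
Proof. by move=> le_kn; rewrite coef_poly ltnS le_kn. Qed.

Lemma coef_edpoly1 k : (k <= n)%N -> e`_k = ecoef k.
Proof. by move=> le_kn; rewrite coef_poly ltnS le_kn expr1n mul1r. Qed.

Lemma todd_polyM_edpoly1 : T * e = 1 %[modXn n.+1].
Proof.
apply/eqmodXnP => i; rewrite ltnS coefMr coef1 => le_in.
rewrite big_ord_recl subn0 coef_todd_poly // coef_edpoly1 //.
rewrite [ecoef 0]/ecoef divr1.
case: i le_in => [|m] lt_mn; first by rewrite big_ord0 addr0.
rewrite todd_coefS addrC; apply/eqP; rewrite subr_eq0; apply/eqP.
apply: eq_bigr => j _; rewrite lift0 subSS mulrC.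
rewrite coef_todd_poly ?coef_edpoly1 //; first exact: leq_trans (ltn_ord j) lt_mn.
exact: leq_trans (leq_subr _ _) (ltnW lt_mn).
Qed.

Lemma deriv_X_edpoly1 : ('X * e)^`() = expNX n %[modXn n.+1].
Proof.
apply/eqmodXnP => i; rewrite ltnS => le_in.
rewrite coef_deriv coefXM /expNX coefB coef1 coefXM.
case: i le_in => [|k] lt_kn /=; first by rewrite coef_edpoly1 // subr0 mulr1n.
by rewrite !coef_edpoly1 ?(ltnW lt_kn) // sub0r -ecoefS.
Qed.

Lemma todd_poly_sqrM_deriv : T ^+ 2 * e^`() = - T^`() %[modXn n].
Proof.
have /eqmodXn_deriv := todd_polyM_edpoly1; rewrite derivM derivC => Te'.
have Te1 := eqmodXn_leq (leqnSn n) todd_polyM_edpoly1.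
rewrite (_ : _ * _ = T * (T^`() * e + T * e^`()) + - T^`() * (T * e)); last by ring.
have := eqmodXnD (eqmodXnMl T Te') (eqmodXnMl (- T^`()) Te1).
by rewrite mulr0 add0r mulr1.
Qed.

Lemma todd_poly_expSS i :
  T ^+ i.+2 = T ^+ i.+1 + 'X * (T ^+ i.+1 - T ^+ i * T^`()) %[modXn n.+1].
Proof.
have Te1 := todd_polyM_edpoly1.
have -> : T ^+ i.+2 = T ^+ i.+2 * expNX n + 'X * T ^+ i.+1 * (T * e).
  by rewrite /expNX !exprS; ring.
rewrite [T ^+ i.+1 + _]
  (_ : _ = (T ^+ i.+1 * 1 + 'X * (T ^+ i * - T^`())) + 'X * T ^+ i.+1 * 1);
  last by ring.
apply: eqmodXnD; last exact: eqmodXnMl.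
apply: eqmodXn_trans (eqmodXnMl _ (eqmodXn_sym deriv_X_edpoly1)) _.
rewrite derivM derivX mul1r.
rewrite [T ^+ i.+2 * _]
  (_ : _ = T ^+ i.+1 * (T * e) + 'X * (T ^+ i * (T ^+ 2 * e^`())));
  last by rewrite !exprS; ring.
apply: eqmodXnD; first exact: eqmodXnMl.
by apply/eqmodXn_mulX/eqmodXnMl/todd_poly_sqrM_deriv.
Qed.

Lemma coef_todd_poly_expS j : (j <= n)%N -> (T ^+ j.+1)`_j = 1.
Proof.
elim: j => [_|j IHj lt_jn]; first by rewrite expr1 coef_todd_poly.
have /eqmodXnP/(_ j.+1 lt_jn) -> := todd_poly_expSS j.
by rewrite coefD coefXM coefB coef_exp_deriv IHj ?(ltnW lt_jn) // addrC subrK.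
Qed.

Lemma coef0_todd_expNX a : (T * expNX n ^+ a)`_0 = 1.
Proof.
elim: a => [|a IHa]; first by rewrite expr0 mulr1 coef_todd_poly.
by rewrite exprSr mulrA coef0M IHa /expNX coefB coef1 coefXM subr0 mulr1.
Qed.

Lemma coef_todd_expNX_rec j a : (j < n)%N ->
  (T ^+ j.+2 * expNX n ^+ a.+1)`_j.+1 =
  (T ^+ j.+2 * expNX n ^+ a)`_j.+1 - (T ^+ j.+1 * expNX n ^+ a)`_j.
Proof.
move=> lt_jn; set v := T ^+ j.+1 * expNX n ^+ a.
have -> : T ^+ j.+2 * expNX n ^+ a.+1 = T ^+ j.+2 * expNX n ^+ a - 'X * v * (T * e).
  by rewrite /v /expNX exprSr !exprS; ring.
have /eqmodXnP/(_ j.+1 lt_jn) := eqmodXnMl ('X * v) todd_polyM_edpoly1.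
by rewrite coefB => ->; rewrite mulr1 coefXM.
Qed.

Lemma coef_todd_expNX j a : (j <= n)%N ->
  (T ^+ j.+1 * expNX n ^+ a.+1)`_j = (-1) ^+ j * 'C(a, j)%:R.
Proof.
elim: a j => [|a IHa] [|j] lt_jn;
  try by rewrite expr1 coef0_todd_expNX expr0 bin0 mul1r.
  rewrite coef_todd_expNX_rec // expr0 !mulr1 !coef_todd_poly_expS ?(ltnW lt_jn) //.
  by rewrite subrr bin0n mulr0.
rewrite coef_todd_expNX_rec // !IHa ?(ltnW lt_jn) // binS natrD exprS; ring.
Qed.

End ToddSeries.

Section TruncatedExp.
Variable R : numFieldType.

Definition expXn (m : nat) (c : R) : {poly R} := \poly_(k < m) (c ^+ k / k`!%:R).

Lemma expXnD m a b : expXn m a * expXn m b = expXn m (a + b) %[modXn m].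
Proof.
apply/eqmodXnP => i lt_im; rewrite coefM coef_poly lt_im addrC exprDn mulr_suml.
apply: eq_bigr => -[j le_ji] _ /=.
rewrite !coef_poly (leq_ltn_trans (leq_subr _ _) lt_im) (leq_ltn_trans _ lt_im) //.
have -> : (i`!%:R : R) = 'C(i, j)%:R * (j`!%:R * (i - j)`!%:R).
  by rewrite -!natrM bin_fact.
have bin_neq0 : ('C(i, j)%:R : R) != 0 by rewrite pnatr_eq0 -lt0n bin_gt0.
by rewrite -mulr_natr; field; rewrite bin_neq0 !fact_neq0.
Qed.

Lemma expXnMn m a d : expXn m a ^+ d = expXn m (a *+ d) %[modXn m].
Proof.
elim: d => [|d IHd].
  apply/eqmodXnP => i lt_im; rewrite expr0 mulr0n coef1 coef_poly lt_im expr0n.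
  by case: i {lt_im} => [|i] /=; rewrite ?divr1 ?mul0r.
rewrite exprSr mulrSr; apply: eqmodXn_trans (eqmodXnM IHd (eqmodXn_refl _ _)) _.
exact: expXnD.
Qed.

End TruncatedExp.

Lemma expNX_expXn n : expNX n = expXn n.+2 (-1) %[modXn n.+2].
Proof.
apply/eqmodXnP => i lt_in.
rewrite /expNX /expXn coefB coef1 coefXM [in RHS]coef_poly lt_in.
case: i lt_in => [|k] lt_kn /=; first by rewrite subr0 expr0 divr1.
by rewrite coef_edpoly1 // /ecoef exprS; ring.
Qed.

Lemma mulX_scale_edpoly n d :
  'X * (d%:R *: edpoly n d) = 1 - expXn n.+2 (- d%:R) %[modXn n.+2].
Proof.
apply/eqmodXnP => i lt_in; rewrite /expXn coefB coef1 coefXM [in RHS]coef_poly lt_in.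
case: i lt_in => [|k] lt_kn /=; first by rewrite expr0 divr1 subrr.
rewrite coefZ coef_poly (lt_kn : (k < n.+1)%N) /ecoef exprS.
by rewrite [(- d%:R) ^+ _]exprNn; ring.
Qed.

Lemma scale_edpoly_geom n d :
  d%:R *: edpoly n d = edpoly n 1 * \sum_(j < d) expNX n ^+ j %[modXn n.+1].
Proof.
apply/eqmodXn_mulX/(eqmodXn_trans (mulX_scale_edpoly n d)).
have -> : 'X * (edpoly n 1 * \sum_(j < d) expNX n ^+ j) = 1 ^+ d - expNX n ^+ d.
  rewrite mulrA subrXX; congr (_ * _); first by rewrite /expNX opprB addrC subrK.
  by apply: eq_bigr => j _; rewrite expr1n mul1r.
rewrite expr1n; apply/eqmodXnB/eqmodXn_sym; first exact: eqmodXn_refl.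
apply: eqmodXn_trans (eqmodXnX d (expNX_expXn n)) _.
by rewrite -mulNrn; apply: expXnMn.
Qed.

Lemma coefM_ge_mul (R : numDomainType) (p q : {poly R}) i j :
  (forall k, 0 <= p`_k) -> (forall k, 0 <= q`_k) ->
  p`_i * q`_j <= (p * q)`_(i + j).
Proof.
move=> p_ge0 q_ge0; rewrite coefM.
have lt_i : (i < (i + j).+1)%N by rewrite ltnS leq_addr.
rewrite (bigD1 (Ordinal lt_i)) //= addKn lerDl.
by apply: sumr_ge0 => k _; apply: mulr_ge0.
Qed.

Section GeomProd.
Context {R : numDomainType}.

Definition geom_poly (d : nat) : {poly R} := \poly_(j < d) 1.

Definition geom_prod (ds : seq nat) : {poly R} := \prod_(d <- ds) geom_poly d.

Lemma size_geom_poly d : size (geom_poly d) = d.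
Proof.
case: d => [|d]; first by apply/eqP; rewrite -leqn0 size_poly.
by rewrite size_poly_eq // oner_eq0.
Qed.

Lemma coef_geom_poly d i : (geom_poly d)`_i = (i < d)%:R.
Proof. by rewrite coef_poly; case: ifP. Qed.

Lemma geom_prod_comp ds v :
  geom_prod ds \Po v = \prod_(d <- ds) \sum_(j < d) v ^+ j.
Proof.
rewrite /geom_prod; elim: ds => [|d ds IHds]; first by rewrite !big_nil comp_polyC.
rewrite !big_cons comp_polyM IHds comp_polyE size_geom_poly; congr (_ * _).
by apply: eq_bigr => j _; rewrite coef_geom_poly ltn_ord scale1r.
Qed.

Lemma size_geom_prod ds : all (fun d => 0 < d)%N ds ->
  size (geom_prod ds) = (\sum_(d <- ds) d.-1).+1.
Proof.
elim: ds => [|d ds' IHds] /=; first by rewrite /geom_prod !big_nil size_poly1.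
case/andP => d_gt0 ds_gt0; rewrite /geom_prod !big_cons size_mul.
- by rewrite size_geom_poly IHds //; lia.
- by rewrite -size_poly_eq0 size_geom_poly -lt0n.
- by rewrite -size_poly_eq0 IHds.
Qed.

Lemma coef0_geom_prod ds : all (fun d => 0 < d)%N ds ->
  (geom_prod ds)`_0 = 1.
Proof.
elim: ds => [|d ds' IHds] /=; first by rewrite /geom_prod big_nil coef1.
case/andP => d_gt0 ds'_gt0.
by rewrite /geom_prod big_cons coef0M IHds // coef_geom_poly d_gt0 mulr1.
Qed.

Lemma coef_geom_prod_deg ds : all (fun d => 0 < d)%N ds ->
  (geom_prod ds)`_(\sum_(d <- ds) d.-1) = 1.
Proof.
move=> ds_gt0.
rewrite -[X in _`_X]/((\sum_(d <- ds) d.-1).+1.-1) -size_geom_prod // -lead_coefE.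
rewrite lead_coef_prod big_seq big1 // => d /(allP ds_gt0) d_gt0.
by rewrite lead_coefE size_geom_poly coef_geom_poly prednK ?leqnn.
Qed.

Lemma coef_geom_prod_ge0 ds i : 0 <= (geom_prod ds)`_i.
Proof.
elim: ds i => [|d ds IHds] i; first by rewrite /geom_prod big_nil coef1 ler0n.
rewrite /geom_prod big_cons coefM; apply: sumr_ge0 => j _.
by apply: mulr_ge0; rewrite ?coef_geom_poly ?ler0n.
Qed.

Lemma coef_geom_prod_ge1 ds i : all (fun d => 0 < d)%N ds ->
  (i <= \sum_(d <- ds) d.-1)%N -> 1 <= (geom_prod ds)`_i.
Proof.
elim: ds i => [|d ds IHds] i /=.
  by rewrite big_nil leqn0 => _ /eqP ->; rewrite /geom_prod big_nil coef1.
case/andP => d_gt0 ds_gt0; rewrite big_cons => le_i.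
have -> : i = (minn i d.-1 + (i - minn i d.-1))%N by rewrite subnKC // geq_minl.
rewrite /geom_prod big_cons; apply: le_trans (coefM_ge_mul _ _ _ _) => //.
- rewrite coef_geom_poly (_ : minn i d.-1 < d)%N ?mul1r; last by lia.
  by apply: IHds => //; lia.
- by move=> k; rewrite coef_geom_poly ler0n.
- exact: coef_geom_prod_ge0.
Qed.

End GeomProd.

Lemma ci_todd_comp n ds :
  ci_todd n ds = (todd_poly n ^+ n.+1 * (geom_prod ds \Po expNX n))`_n.
Proof.
rewrite /ci_todd -coefZ scalerAr -scaler_prod.
set T := todd_poly n; set e := edpoly n 1.
have /eqmodXnP/(_ n (ltnSn n)) -> :=
  eqmodXnMl (T ^+ (n + size ds).+1) (eqmodXn_prod ds (scale_edpoly_geom n)).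
rewrite geom_prod_comp big_split /= big_const_seq count_predT iter_mulr_1.
set P := \prod_(d <- ds) _.
have -> : T ^+ (n + size ds).+1 * (e ^+ size ds * P) =
          T ^+ n.+1 * P * (T * e) ^+ size ds.
  by rewrite exprMn -addSn exprD; ring.
have /eqmodXnP/(_ n (ltnSn n)) -> :=
  eqmodXnMl (T ^+ n.+1 * P) (eqmodXnX (size ds) (todd_polyM_edpoly1 n)).
by rewrite expr1n mulr1.
Qed.

Lemma ci_todd_binomial_sum n ds : all (fun d => 0 < d)%N ds ->
  ci_todd n ds = 1 + (-1) ^+ n *
    \sum_(a < \sum_(d <- ds) d.-1) (geom_prod ds)`_a.+1 * 'C(a, n)%:R.
Proof.
move=> ds_gt0; rewrite ci_todd_comp comp_polyE mulr_sumr coef_sum.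
rewrite size_geom_prod // big_ord_recl -scalerAr coefZ expr0 mulr1.
rewrite coef_todd_poly_expS // coef0_geom_prod // mulr1 mulr_sumr; congr (_ + _).
by apply: eq_bigr => a _; rewrite -scalerAr coefZ coef_todd_expNX // mulrCA.
Qed.

Lemma gbinom_nat k m : gbinom k%:R m = 'C(k, m)%:R.
Proof.
have prod_ffact : \prod_(i < m) (k%:R - i%:R : rat) = (k ^_ m)%:R.
  elim: m => [|m IHm]; first by rewrite big_ord0 ffactn0.
  rewrite big_ord_recr /= IHm ffactnSr natrM.
  have [le_mk|lt_km] := leqP m k; first by rewrite natrB.
  by rewrite (ffact_small lt_km) !mul0r.
by rewrite /gbinom prod_ffact -bin_ffact natrM mulfK ?fact_neq0.
Qed.

Lemma sum_bin_ord n D : (\sum_(a < D) 'C(a, n))%N = 'C(D, n.+1).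
Proof.
elim: D => [|D IHD]; first by rewrite big_ord0 bin0n.
by rewrite big_ord_recr /= IHD binS.
Qed.

Lemma ci_c1E n ds : all (fun d => 0 < d)%N ds ->
  ci_c1 n ds = n.+1%:Z - (\sum_(d <- ds) d.-1)%:Z.
Proof.
have sum_pred : all (fun d => 0 < d)%N ds ->
    (\sum_(d <- ds) d = \sum_(d <- ds) d.-1 + size ds)%N.
  elim: ds => [|d ds IHds] /=; first by rewrite !big_nil.
  by case/andP => d_gt0 /IHds; rewrite !big_cons; lia.
by move=> /sum_pred; rewrite /ci_c1 => ->; lia.
Qed.

Theorem corollary4p5 (n : nat) (ds : seq nat) :
  all (fun d => 1 < d)%N ds ->
  [/\ (0 < ci_c1 n ds -> ci_todd n ds = 1),
      (ci_c1 n ds = 0 -> ci_todd n ds = 1 + (-1) ^+ n)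
    & (ci_c1 n ds < 0 ->
        gbinom ((n.+1)%:Z - ci_c1 n ds)%:~R n.+1 + (-1) ^+ n
          <= (-1) ^+ n * ci_todd n ds)].
Proof.
move=> ds_gt1; have ds_gt0 : all (fun d => 0 < d)%N ds.
  by apply: sub_all ds_gt1 => d /ltnW.
rewrite ci_c1E // ci_todd_binomial_sum //.
have G_deg := coef_geom_prod_deg ds_gt0; have G_ge1 := coef_geom_prod_ge1 ds_gt0.
set D := (\sum_(d <- ds) d.-1)%N in G_deg G_ge1 *.
split=> [c1_gt0 | c1_eq0 | c1_lt0].
- rewrite big1 ?mulr0 ?addr0 // => a _; rewrite bin_small ?mulr0 //.
  by apply: leq_trans (ltn_ord a) _; lia.
- have D_eq : D = n.+1 by lia.
  rewrite D_eq big_ord_recr /= big1 => [|a _]; last by rewrite bin_small ?mulr0.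
  by rewrite -D_eq G_deg binn add0r !mulr1.
- have -> : (n.+1%:Z - (n.+1%:Z - D%:Z)) = D%:Z by lia.
  rewrite -pmulrn gbinom_nat -sum_bin_ord natr_sum.
  rewrite mulrDr mulr1 mulrA -expr2 sqrr_sign mul1r addrC lerD2l.
  apply: ler_sum => a _; apply: ler_peMl; first exact: ler0n.
  by apply: G_ge1; apply: ltn_ord.
Qed.
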